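(* If $Q$ is a Jordan loop, $x\in Q$ and $n\ge 0$ is an integer with binary expansion $n=\sum_{i=0}^k a_i2^i$ ($a_i\in\{0,1\}$), then $x^{n}=x^{1\cdot a_0}\bigl(x^{2\cdot a_1}\bigl(\cdots\bigl(x^{2^{k-1}\cdot a_{k-1}}\, x^{2^k\cdot a_k}\bigr)\cdots\bigr)\bigr).$
   Context: A loop is a set $Q$ with a binary operation (juxtaposition) and neutral element $e$ such that for all $a,b$ the equations $ax=b$, $ya=b$ have unique solutions. A Jordan loop is a commutative loop satisfying $x^2(yx)=(x^2y)x$. For $k\ge 0$, $x^k$ denotes the right-associated product $x(x(\cdots(xe)\cdots))$ with $k$ factors $x$; in particular $x^0=e$. *)

From mathcomp Require Import all_boot.
Set Implicit Arguments. Unset Strict Implicit. Unset Printing Implicit Defensive.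

Definition is_loop (T : Type) (mul : T -> T -> T) (e : T) : Prop :=
  (forall a, mul e a = a /\ mul a e = a) /\
  (forall a b, exists! x, mul a x = b) /\
  (forall a b, exists! y, mul y a = b).

Definition is_jordan_loop (T : Type) (mul : T -> T -> T) (e : T) : Prop :=
  is_loop mul e /\
  (forall a b, mul a b = mul b a) /\
  (forall x y, mul (mul x x) (mul y x) = mul (mul (mul x x) y) x).

Fixpoint rpow (T : Type) (mul : T -> T -> T) (e : T) (x : T) (k : nat) : T :=
  match k with
  | 0 => e
  | k'.+1 => mul x (rpow mul e x k')
  end.

Fixpoint binprod (T : Type) (mul : T -> T -> T) (e : T) (x : T)
    (a : nat -> nat) (i m : nat) : T :=
  match m with
  | 0 => rpow mul e x (2 ^ i * a i)
  | m'.+1 => mul (rpow mul e x (2 ^ i * a i)) (binprod mul e x a i.+1 m')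
  end.

From mathcomp Require Import all_boot.

(* They give x^2 (x x^n) = x (x^2 x^n), hence x^2 x^n = x^(n+2) and by
   induction (x^(2^i))^j = x^(2^i j).  With z = x^(2^i) the factor z^(a_i)
   times (z^2)^s is z^(a_i + 2 s) for a bit a_i, which peels off one binary
   digit of the exponent at a time. *)

Section CommutativeJordanMagma.

Variables (T : Type) (mul : T -> T -> T) (e : T).
Hypothesis mulC : commutative mul.
Hypothesis mul1x : left_id e mul.
Hypothesis jordan : forall x y, mul (mul x x) (mul y x) = mul (mul (mul x x) y) x.

Local Notation pow := (rpow mul e).

Lemma mulx1 : right_id e mul.
Proof. by move=> x; rewrite mulC mul1x. Qed.

Lemma rpow1 x : pow x 1 = x.
Proof. exact: mulx1. Qed.

Lemma jordan_left x y : mul (mul x x) (mul x y) = mul x (mul (mul x x) y).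
Proof. by rewrite [mul x y]mulC jordan [mul _ x]mulC. Qed.

Lemma mulsq_rpow x n : mul (mul x x) (pow x n) = pow x n.+2.
Proof.
elim: n => [|n IHn] /=; first by rewrite !mulx1.
by rewrite jordan_left IHn.
Qed.

Lemma rpow_sq x j : pow (mul x x) j = pow x (2 * j).
Proof.
elim: j => [|j IHj]; first by rewrite muln0.
by rewrite [LHS]/= IHj mulsq_rpow mulnS add2n.
Qed.

Lemma rpow_rpow_exp2 x i j : pow (pow x (2 ^ i)) j = pow x (2 ^ i * j).
Proof.
elim: i j => [|i IHi] j.
  by rewrite expn0 mul1n rpow1.
have sq_pow : pow x (2 ^ i.+1) = mul (pow x (2 ^ i)) (pow x (2 ^ i)).
  by rewrite expnS mulnC -IHi /= mulx1.
by rewrite sq_pow rpow_sq IHi expnS mulnA [2 * _]mulnC.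
Qed.

Lemma mul_rpow_bit z b s : b <= 1 -> mul (pow z b) (pow (mul z z) s) = pow z (b + 2 * s).
Proof.
by case: b => [|[|//]] _; rewrite rpow_sq; [rewrite mul1x add0n | rewrite rpow1 add1n].
Qed.

Lemma binprodE x a i m : (forall j, j <= m -> a (i + j) <= 1) ->
  binprod mul e x a i m = pow x (2 ^ i * \sum_(j < m.+1) a (i + j) * 2 ^ j).
Proof.
elim: m i => [|m IHm] i a_bit.
  by rewrite big_ord1 addn0 muln1.
have tail_sum : \sum_(j < m.+1) a (i + lift ord0 j) * 2 ^ lift ord0 j
              = 2 * \sum_(j < m.+1) a (i.+1 + j) * 2 ^ j.
  by rewrite big_distrr; apply: eq_bigr => j _; rewrite addnS expnS mulnCA.
rewrite /= IHm => [|j le_jm]; last by rewrite addSnnS a_bit.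
rewrite [in RHS]big_ord_recl addn0 muln1 tail_sum -[in RHS]rpow_rpow_exp2.
have bit_i : a i <= 1 by rewrite -[i]addn0 a_bit.
rewrite -mul_rpow_bit // rpow_sq !rpow_rpow_exp2.
by rewrite expnS mulnA [2 * _]mulnC.
Qed.

End CommutativeJordanMagma.

Theorem corollary2p3 (T : Type) (mul : T -> T -> T) (e : T)
    (HQ : is_jordan_loop mul e) (x : T) (n k : nat) (a : nat -> nat)
    (Ha : forall i, i <= k -> a i <= 1)
    (Hn : n = \sum_(i < k.+1) a i * 2 ^ i) :
  rpow mul e x n = binprod mul e x a 0 k.
Proof.
case: HQ => [[unit _] [mulC jordan]].
have mul1x : left_id e mul by move=> y; case: (unit y).
by rewrite (@binprodE T mul e mulC mul1x jordan) // expn0 mul1n Hn.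
Qed.
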